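(* Let $z$ be a nonzero element of $Z_{\mathrm{gr}}(E(\Lambda_{\mathbf{q}}))$ which is homogeneous both for the length grading and for the $\mathbb{Z}$-grading in which $a_i$ has degree $1$, $\bar a_i$ degree $-1$ and $e_i$ degree $0$. Then there are integers $s, t \geqslant 0$ with $s \equiv t \pmod m$ and $c_0 \in K^*$ such that $z = \sum_{i=0}^{m-1} c_i \gamma_i^{s}\delta_i^{t}$ where, for $i = 0, \ldots, m-1$, $$c_i = (-1)^{is}\prod_{k=1}^{i}(q_k\cdots q_{k+t-1})^{-1}c_0 = (-1)^{it}\prod_{k=1}^{i}(q_k\cdots q_{k+s-1})^{-1}c_0,$$ and moreover $\zeta^{s} = (-1)^{mt}$ and $\zeta^{t} = (-1)^{ms}$.
   Context: Let $K$ be a field, $m \geqslant 1$, $\mathcal{Q}$ the quiver with vertices $0, \ldots, m-1$ (indices modulo $m$), arrows $a_i: i\to i+1$, $\bar a_i: i+1\to i$, trivial paths $e_i$; paths written left to right. For $\mathbf{q}=(q_0,\dots,q_{m-1})\in(K^* )^m$, $\Lambda_{\mathbf{q}} = K\mathcal{Q}/I_{\mathbf{q}}$ with $I_{\mathbf{q}}$ generated by $a_ia_{i+1}$, $\bar a_{i-1}\bar a_{i-2}$, $q_ia_i\bar a_i - \bar a_{i-1}a_{i-1}$; $\zeta = q_0\cdots q_{m-1}$; indices of the $q_k$ are taken modulo $m$. $E(\Lambda_{\mathbf{q}}) = \operatorname{Ext}^*_{\Lambda_{\mathbf{q}}}(\Lambda_{\mathbf{q}}/\mathfrak{r}, \Lambda_{\mathbf{q}}/\mathfrak{r})$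 ($\mathfrak r$ the Jacobson radical) with Yoneda product; since $\Lambda_{\mathbf q}$ is Koszul, it is identified with $K\mathcal{Q}$ modulo the ideal generated by $q_i^{-1}a_i\bar a_i + \bar a_{i-1}a_{i-1}$, $i=0,\dots,m-1$, graded by path length (length $n$ corresponding to $\operatorname{Ext}^n$). Write $\gamma_i^n = a_ia_{i+1}\cdots a_{i+n-1}$ and $\delta_i^n = \bar a_{i+n-1}\cdots\bar a_{i+1}\bar a_i$ (paths of length $n$; $\gamma_i^0=\delta_i^0=e_i$). The graded centre $Z_{\mathrm{gr}}(E)$ is the subalgebra generated by homogeneous $z$ of length $n$ with $zg = (-1)^{nk}gz$ for all homogeneous $g$ of length $k$. *)

From HB Require Import structures.
From mathcomp Require Import all_boot all_order all_algebra.
Set Implicit Arguments. Unset Strict Implicit. Unset Printing Implicit Defensive.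
Import GRing.Theory.
Local Open Scope ring_scope.

(* A path is determined by its start
   vertex and the sequence of arrow directions: [true] = arrow a_v : v -> v+1,
   [false] = arrow abar_{v-1} : v -> v-1.  Paths are written left to right. *)
Definition path (m : nat) := ('I_m * seq bool)%type.

Definition vtx (m : nat) (hm : (0 < m)%N) (k : nat) : 'I_m :=
  Ordinal (ltn_pmod k hm).

Definition pend (m : nat) (p : path m) : 'I_m :=
  foldl (fun v (b : bool) => if b then ordS v else ord_pred v) p.1 p.2.

(* elements of the path algebra K Q, as formal linear combinations of paths *)
Definition kq (K : fieldType) (m : nat) := seq (K * path m).

Definition coefp (K : fieldType) (m : nat) (x : kq K m) (p : path m) : K :=
  \sum_(e <- x | e.2 == p) e.1.

Definition mulx (K : fieldType) (m : nat) (x y : kq K m) : kq K m :=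
  flatten [seq (if pend e.2 == f.2.1
                then [:: (e.1 * f.1, (e.2.1, e.2.2 ++ f.2.2))] else [::])
          | e <- x, f <- y].

Definition scalex (K : fieldType) (m : nat) (c : K) (x : kq K m) : kq K m :=
  [seq (c * e.1, e.2) | e <- x].

Definition subx (K : fieldType) (m : nat) (x y : kq K m) : kq K m :=
  x ++ scalex (-1) y.

(* generator q_i^{-1} a_i abar_i + abar_{i-1} a_{i-1} of the ideal of E *)
Definition relE (K : fieldType) (m : nat) (q : 'I_m -> K) (i : 'I_m) : kq K m :=
  [:: ((q i)^-1, (i, [:: true; false])); (1, (i, [:: false; true]))].

(* membership in the two-sided ideal generated by the relE i:
   x is (coefficientwise) a finite sum of  c * u * relE r * v  with u, v paths *)
Definition inI (K : fieldType) (m : nat) (q : 'I_m -> K) (x : kq K m) : Prop :=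
  exists l : seq (K * path m * 'I_m * path m),
    forall p, coefp x p =
      coefp (flatten [seq mulx (mulx [:: (g.1.1.1, g.1.1.2)] (relE q g.1.2))
                               [:: (1, g.2)] | g <- l]) p.

Definition eq_in_E (K : fieldType) (m : nat) (q : 'I_m -> K) (x y : kq K m) : Prop :=
  inI q (subx x y).

Definition len_homog (K : fieldType) (m : nat) (n : nat) (x : kq K m) : bool :=
  all (fun e => size e.2.2 == n) x.

Definition zdeg (w : seq bool) : int := (count id w)%:Z - (count negb w)%:Z.

Definition zhomog (K : fieldType) (m : nat) (d : int) (x : kq K m) : bool :=
  all (fun e => zdeg e.2.2 == d) x.

Definition graded_central (K : fieldType) (m : nat) (q : 'I_m -> K)
    (n : nat) (x : kq K m) : Prop :=
  forall (k : nat) (y : kq K m), len_homog k y ->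
    eq_in_E q (mulx x y) (scalex ((-1) ^+ (n * k)) (mulx y x)).

Definition qq (K : fieldType) (m : nat) (hm : (0 < m)%N) (q : 'I_m -> K) (k : nat) : K :=
  q (vtx hm k).

Definition zeta (K : fieldType) (m : nat) (q : 'I_m -> K) : K := \prod_(i < m) q i.

(* gamma_i^s = a_i a_{i+1} ... a_{i+s-1} *)
Definition gam (K : fieldType) (m : nat) (hm : (0 < m)%N) (i s : nat) : kq K m :=
  [:: (1, (vtx hm i, nseq s true))].

(* delta_i^t = abar_{i+t-1} ... abar_i  (a path from i+t to i) *)
Definition del (K : fieldType) (m : nat) (hm : (0 < m)%N) (i t : nat) : kq K m :=
  [:: (1, (vtx hm (i + t), nseq t false))].

Definition coef_c (K : fieldType) (m : nat) (hm : (0 < m)%N) (q : 'I_m -> K)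
    (s t : nat) (c0 : K) (i : nat) : K :=
  (-1) ^+ (i * s) * \prod_(1 <= k < i.+1) (\prod_(k <= j < k + t) qq hm q j)^-1 * c0.

From Pilot Require Import Defs.
From HB Require Import structures.
From mathcomp Require Import all_boot all_order all_algebra zify.
Set Implicit Arguments. Unset Strict Implicit. Unset Printing Implicit Defensive.
Import GRing.Theory.
Local Open Scope ring_scope.

(* We never form the quotient E = KQ / I.  A combination x of paths is tested
   against functions G : path -> K through  lin G x = sum_e e.1 * G e.2;
   combinations with the same coefficients agree on every G (lin_ext), so
   membership in I becomes an identity between such values (inI_lin).

   1. Paths: the end of a path only depends on its numbers of arrows a and
      abar (pend_counts); a^s abar^t is a cycle iff s = t mod m.
   2. Congruence: equality in E is an equivalence compatible with scaling,
      sums and right multiplication by a path (eqE_refl ... eqE_cat).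
   3. Normal form: the relation  abar a = -q^-1 a abar  rewrites a path p from
      v with s arrows a and t arrows abar into  weight p  times the normal
      word a^s abar^t from v (nf_path).  The weight, restricted to paths from
      v with counts (s, t), kills every generator of I, so it is a functional
      on E (detect_eqE) which reads off the coefficient of that normal word.
   4. Coefficients: a bihomogeneous z has all its paths with the same counts
      (s, t), so z = sum_v c_v a^s abar^t from v.  Graded commutation of z
      with e_j, a_j and abar_j, read through these functionals, forces
      s = t mod m and two first-order recurrences for c_v.
   5. Solving the recurrences gives the two closed forms of c_i; periodicity
      c_m = c_0 gives the relations for zeta. *)

Section Paths.
Variable m : nat.

Lemma pend_cat (v : 'I_m) w1 w2 : pend (v, w1 ++ w2) = pend (pend (v, w1), w2).
Proof. by rewrite /pend /= foldl_cat. Qed.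

Lemma pend_TF (v : 'I_m) w : pend (v, [:: true, false & w]) = pend (v, w).
Proof. by rewrite /pend /= ordSK. Qed.

Lemma pend_FT (v : 'I_m) w : pend (v, [:: false, true & w]) = pend (v, w).
Proof. by rewrite /pend /= ord_predK. Qed.

Lemma iter_comm (T : Type) (f g : T -> T) n x :
  (forall y, f (g y) = g (f y)) -> iter n f (g x) = g (iter n f x).
Proof. by move=> h; elim: n => //= n ->. Qed.

Lemma ordS_pred_comm (y : 'I_m) : ordS (ord_pred y) = ord_pred (ordS y).
Proof. by rewrite ord_predK ordSK. Qed.

Definition endpoint (v : 'I_m) s t := iter s (@ordS m) (iter t (@ord_pred m) v).

Lemma pend_counts (v : 'I_m) w : pend (v, w) = endpoint v (count id w) (count negb w).
Proof.
rewrite /pend /endpoint /=; elim: w v => [|b w IH] v //=.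
rewrite IH; case: b => /=; rewrite ?add0n ?add1n.
  rewrite (iter_comm _ _ (fun y => esym (ordS_pred_comm y))).
  by rewrite (@iter_comm _ (@ordS m) (@ordS m) _ _ (fun y => erefl)).
by rewrite (@iter_comm _ (@ord_pred m) (@ord_pred m) _ _ (fun y => erefl)).
Qed.

Lemma iter_ordS_val k (v : 'I_m) : val (iter k (@ordS m) v) = ((v + k) %% m)%N.
Proof.
elim: k => [|k IH] /=; first by rewrite addn0 modn_small.
by rewrite IH -addn1 modnDml addn1 addnS.
Qed.

Lemma iter_ordS_pred k (v : 'I_m) : iter k (@ordS m) (iter k (@ord_pred m) v) = v.
Proof.
elim: k => [|k IH] //=.
by rewrite (iter_comm _ _ (fun y => ordS_pred_comm y)) ord_predK IH.
Qed.

Lemma iter_ordS_eq s t (v : 'I_m) :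
  iter s (@ordS m) v = iter t (@ordS m) v <-> s = t %[mod m].
Proof.
split=> [h|h].
  by have := congr1 val h; rewrite !iter_ordS_val => /eqP; rewrite eqn_modDl => /eqP.
by apply: val_inj; rewrite !iter_ordS_val -modnDmr h modnDmr.
Qed.

Lemma endpoint_cycle (v : 'I_m) s t : s = t %[mod m] -> endpoint v s t = v.
Proof. by move=> h; rewrite /endpoint; have /iter_ordS_eq -> := h; apply: iter_ordS_pred. Qed.

Lemma endpoint_cycleP (v : 'I_m) s t : endpoint v s t = v -> s = t %[mod m].
Proof.
move=> h; apply/(iter_ordS_eq s t v).
by rewrite -[in RHS]h /endpoint -iterD addnC iterD iter_ordS_pred.
Qed.

End Paths.

Definition nfword s t := nseq s true ++ nseq t false.

Lemma count_nfword s t : count id (nfword s t) = s /\ count negb (nfword s t) = t.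
Proof. by rewrite /nfword !count_cat !count_nseq /= mul1n mul0n add0n addn0 mul1n. Qed.

Lemma pend_nfword m (v : 'I_m) s t : pend (v, nfword s t) = endpoint v s t.
Proof. by have [h1 h2] := count_nfword s t; rewrite pend_counts h1 h2. Qed.

Lemma nfwordF s t : nfword s t ++ [:: false] = nfword s t.+1.
Proof. by rewrite /nfword -catA -[t.+1]addn1 nseqD. Qed.

Lemma nfwordT s : nfword s 0 ++ [:: true] = nfword s.+1 0.
Proof. by rewrite /nfword !cats0 -[s.+1]addn1 nseqD. Qed.

Section LinearFunctionals.
Variables (K : fieldType) (m : nat).

Definition lin (G : Defs.path m -> K) (x : kq K m) : K := \sum_(e <- x) e.1 * G e.2.

Lemma lin_nil G : lin G [::] = 0. Proof. by rewrite /lin big_nil. Qed.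

Lemma lin_cons G e x : lin G (e :: x) = e.1 * G e.2 + lin G x.
Proof. by rewrite /lin big_cons. Qed.

Lemma lin_cat G x y : lin G (x ++ y) = lin G x + lin G y.
Proof. by rewrite /lin big_cat. Qed.

Lemma lin_scale G c x : lin G (scalex c x) = c * lin G x.
Proof.
rewrite /lin /scalex big_map mulr_sumr.
by apply: eq_bigr => e _ /=; rewrite mulrA.
Qed.

Lemma lin_sub G x y : lin G (subx x y) = lin G x - lin G y.
Proof. by rewrite /subx lin_cat lin_scale mulN1r. Qed.

Lemma lin_flatten G (ss : seq (kq K m)) : lin G (flatten ss) = \sum_(s <- ss) lin G s.
Proof. by elim: ss => [|a l IH] /=; rewrite ?big_nil ?lin_nil // lin_cat IH big_cons. Qed.

Lemma lin_flatten_map G (T : Type) (f : T -> kq K m) (l : seq T) :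
  lin G (flatten (map f l)) = \sum_(g <- l) lin G (f g).
Proof. by rewrite lin_flatten big_map. Qed.

Lemma lin_eq_in G1 G2 x :
  (forall e, e \in x -> G1 e.2 = G2 e.2) -> lin G1 x = lin G2 x.
Proof.
by move=> h; rewrite /lin [LHS]big_seq [RHS]big_seq; apply: eq_bigr => e /h ->.
Qed.

Lemma lin_scaleG k (H : Defs.path m -> K) x : lin (fun u => k * H u) x = k * lin H x.
Proof. by rewrite /lin mulr_sumr; apply: eq_bigr => e _; rewrite mulrCA. Qed.

Lemma lin_mulx G x y : lin G (mulx x y) =
  \sum_(e <- x) \sum_(f <- y) e.1 * f.1 *
     (if pend e.2 == f.2.1 then G (e.2.1, e.2.2 ++ f.2.2) else 0).
Proof.
rewrite /mulx lin_flatten big_flatten /= big_map; apply: eq_bigr => e _.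
rewrite big_map; apply: eq_bigr => f _.
by case: ifP => _; rewrite ?lin_nil ?mulr0 // lin_cons lin_nil addr0.
Qed.

Lemma lin_mulx_path G x y : lin G (mulx x [:: y]) =
  lin (fun u => y.1 * if pend u == y.2.1 then G (u.1, u.2 ++ y.2.2) else 0) x.
Proof.
rewrite lin_mulx; apply: eq_bigr => e _; rewrite big_cons big_nil addr0.
by rewrite mulrA [_ * y.1]mulrC -mulrA.
Qed.

Lemma lin_path_mulx G y x : lin G (mulx [:: y] x) =
  y.1 * lin (fun u => if pend y.2 == u.1 then G (y.2.1, y.2.2 ++ u.2) else 0) x.
Proof.
rewrite lin_mulx big_cons big_nil addr0 mulr_sumr; apply: eq_bigr => f _.
by rewrite mulrA.
Qed.

Lemma mulx_paths (a b : K) (v x : 'I_m) w w' : pend (v, w) = x ->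
  mulx [:: (a, (v, w))] [:: (b, (x, w'))] = [:: (a * b, (v, w ++ w'))].
Proof. by move=> h; rewrite /mulx /= h eqxx. Qed.

Lemma coefp_lin x p : Defs.coefp x p = lin (fun u => (u == p)%:R) x.
Proof.
rewrite /Defs.coefp /lin big_mkcond; apply: eq_bigr => e _.
by case: eqP => _; rewrite ?mulr1 ?mulr0.
Qed.

Lemma lin_supp G x (S : seq (Defs.path m)) : uniq S -> {subset map snd x <= S} ->
  lin G x = \sum_(p <- S) Defs.coefp x p * G p.
Proof.
move=> uS; elim: x => [|e x IH] sub.
  by rewrite lin_nil big1 // => p _; rewrite coefp_lin lin_nil mul0r.
rewrite lin_cons IH; last by move=> p hp; apply: sub; rewrite /= inE hp orbT.
have eS : e.2 \in S by apply: sub; rewrite /= inE eqxx.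
under [in RHS]eq_bigr => p _ do rewrite coefp_lin lin_cons -coefp_lin mulrDl.
rewrite big_split /=; congr (_ + _).
rewrite (bigD1_seq e.2) //= eqxx mulr1 big1 ?addr0 // => p /negbTE.
by rewrite eq_sym => ->; rewrite mulr0 mul0r.
Qed.

Lemma lin_ext G x y : (forall p, Defs.coefp x p = Defs.coefp y p) -> lin G x = lin G y.
Proof.
move=> h; set S := undup (map snd (x ++ y)).
have uS : uniq S by apply: undup_uniq.
rewrite (@lin_supp G x S) // ?(@lin_supp G y S) //.
- by apply: eq_bigr => p _; rewrite h.
- by move=> p hp; rewrite mem_undup map_cat mem_cat hp orbT.
- by move=> p hp; rewrite mem_undup map_cat mem_cat hp.
Qed.

Definition lin_eq x y := forall G, lin G x = lin G y.

End LinearFunctionals.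

Section Ideal.
Variables (K : fieldType) (m : nat) (q : 'I_m -> K).

Definition gen (g : K * Defs.path m * 'I_m * Defs.path m) : kq K m :=
  mulx (mulx [:: (g.1.1.1, g.1.1.2)] (relE q g.1.2)) [:: (1, g.2)].
Definition gens l := flatten [seq gen g | g <- l].

Lemma inI_lin x : inI q x <-> exists l, lin_eq x (gens l).
Proof.
split=> [[l hl]|[l hl]]; exists l; first by move=> G; apply: lin_ext.
by move=> p; rewrite !coefp_lin hl.
Qed.

Lemma inI_lin_eq x y : lin_eq x y -> inI q y -> inI q x.
Proof. by move=> h /inI_lin [l hl]; apply/inI_lin; exists l => G; rewrite h hl. Qed.

Lemma inI_nil : inI q [::].
Proof. by apply/inI_lin; exists [::] => G; rewrite /gens /= lin_nil. Qed.

Lemma inI_cat x y : inI q x -> inI q y -> inI q (x ++ y).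
Proof.
move=> /inI_lin [l1 h1] /inI_lin [l2 h2]; apply/inI_lin; exists (l1 ++ l2) => G.
by rewrite lin_cat h1 h2 /gens map_cat flatten_cat lin_cat.
Qed.

Lemma lin_gen G a u r w : lin G (gen (a, u, r, w)) =
  a * ((pend u == r)%:R * ((pend u == w.1)%:R *
        ((q r)^-1 * G (u.1, u.2 ++ [:: true, false & w.2]) +
         G (u.1, u.2 ++ [:: false, true & w.2])))).
Proof.
case: u => u1 u2.
rewrite /gen lin_mulx_path lin_path_mulx /= !lin_cons lin_nil /= addr0.
rewrite !pend_cat pend_TF pend_FT -!catA /=.
case: (pend (u1, u2) == r); case: (pend (u1, u2) == w.1);
  rewrite ?mul1r ?mul0r ?mulr0 ?addr0 ?mulr1 //; apply: mulr0.
Qed.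

Lemma inI_gen g : inI q (gen g).
Proof. by apply/inI_lin; exists [:: g] => G; rewrite /gens /= cats0. Qed.

Lemma inI_scale c x : inI q x -> inI q (scalex c x).
Proof.
move=> /inI_lin [l hl]; apply/inI_lin.
exists [seq (c * g.1.1.1, g.1.1.2, g.1.2, g.2) | g <- l] => G.
rewrite lin_scale hl /gens !lin_flatten_map big_map mulr_sumr.
by apply: eq_bigr => [[[[a u] r] w]] _ /=; rewrite !lin_gen mulrA.
Qed.

Lemma inI_mulr x w : inI q x -> inI q (mulx x [:: (1, w)]).
Proof.
move=> /inI_lin [l hl]; apply/inI_lin.
exists [seq ((pend g.2 == w.1)%:R * g.1.1.1, g.1.1.2, g.1.2,
             (g.2.1, g.2.2 ++ w.2)) | g <- l] => G.
rewrite lin_mulx_path hl /gens !lin_flatten_map big_map.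
apply: eq_bigr => [[[[a [u1 u2]] r] [w1 w2]]] _ /=.
rewrite !lin_gen /=.
case E1: (pend (u1, u2) == r); rewrite ?mul0r ?mulr0 //.
case E2: (pend (u1, u2) == w1); rewrite ?mul0r ?mulr0 //.
rewrite !mul1r !pend_cat pend_TF pend_FT (eqP E2) -!catA /=.
by case: ifP => _; rewrite ?mul1r ?mulr0 ?mul0r ?add0r ?mulr0.
Qed.

Local Notation eqE := (eq_in_E q).

Lemma eqE_lin_eq x y x' y' : lin_eq x x' -> lin_eq y y' -> eqE x' y' -> eqE x y.
Proof. by move=> h1 h2; apply: inI_lin_eq => G; rewrite !lin_sub h1 h2. Qed.

Lemma eqE_refl x : eqE x x.
Proof. by apply: (inI_lin_eq _ inI_nil) => G; rewrite lin_sub subrr lin_nil. Qed.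

Lemma eqE_trans y x z : eqE x y -> eqE y z -> eqE x z.
Proof.
move=> h1 h2; apply: (inI_lin_eq _ (inI_cat h1 h2)) => G.
by rewrite lin_cat !lin_sub addrA subrK.
Qed.

Lemma eqE_scale c x y : eqE x y -> eqE (scalex c x) (scalex c y).
Proof.
move=> h; apply: (inI_lin_eq _ (inI_scale c h)) => G.
by rewrite !lin_sub !lin_scale lin_sub mulrBr.
Qed.

Lemma eqE_mulr w x y : eqE x y -> eqE (mulx x [:: (1, w)]) (mulx y [:: (1, w)]).
Proof.
move=> h; apply: (inI_lin_eq _ (inI_mulr w h)) => G.
by rewrite lin_sub !lin_mulx_path lin_sub.
Qed.

Lemma eqE_cat x y x' y' : eqE x x' -> eqE y y' -> eqE (x ++ y) (x' ++ y').
Proof.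
move=> h1 h2; apply: (inI_lin_eq _ (inI_cat h1 h2)) => G.
by rewrite lin_cat !lin_sub !lin_cat opprD addrACA.
Qed.

End Ideal.

Section Weight.
Variables (K : fieldType) (m : nat) (hm : (0 < m)%N) (q : 'I_m -> K).
Local Notation qq := (qq hm q).
Local Notation eqE := (eq_in_E q).

Lemma qq_mod a b : a = b %[mod m] -> qq a = qq b.
Proof. by move=> h; rewrite /Defs.qq; congr q; apply: val_inj; rewrite /= h. Qed.

Lemma qq_ord (v : 'I_m) : qq v = q v.
Proof. by rewrite /Defs.qq; congr q; apply: val_inj; rewrite /= modn_small. Qed.

(* Cost of moving an arrow a that leaves e leftwards past t arrows abar. *)
Definition costA (e : 'I_m) t := \prod_(1 <= j < t.+1) (- (qq (e + j))^-1).

(* Cost of moving an arrow abar that leaves B rightwards past n arrows a. *)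
Definition costAbar (B : nat) n := \prod_(0 <= k < n) (- (qq (B + k))^-1).

(* The weight of a path is accumulated letter by letter; the state records the
   weight so far, the current vertex and the number of abar read. *)
Definition wstep (st : K * 'I_m * nat) (b : bool) : K * 'I_m * nat :=
  if b then (st.1.1 * costA st.1.2 st.2, ordS st.1.2, st.2)
  else (st.1.1, ord_pred st.1.2, st.2.+1).

Definition wfold c e t w := foldl wstep (c, e, t) w.
Definition wfrom e t w := (wfold 1 e t w).1.1.
Definition weight (p : Defs.path m) := wfrom p.1 0 p.2.

Lemma wfold_scale w (st : K * 'I_m * nat) :
  foldl wstep st w = ((foldl wstep (1, st.1.2, st.2) w).1.1 * st.1.1,
     (foldl wstep (1, st.1.2, st.2) w).1.2, (foldl wstep (1, st.1.2, st.2) w).2).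
Proof.
elim: w st => [|b w IH] [[c e] t] /=; first by rewrite mul1r.
rewrite IH [in RHS]IH /=; case: b => /=; last by rewrite mulr1.
by rewrite mul1r -mulrA [costA e t * c]mulrC.
Qed.

Lemma wfold_end c e t w :
  (wfold c e t w).1.2 = pend (e, w) /\ (wfold c e t w).2 = (t + count negb w)%N.
Proof.
rewrite /wfold /pend /=; elim: w c e t => [|b w IH] c e t /=; first by rewrite addn0.
case: b; first by have [h1 h2] := IH (c * costA e t) (ordS e) t.
by have [h1 h2] := IH c (ord_pred e) t.+1; rewrite h2 addnS.
Qed.

Lemma costA0 e : costA e 0 = 1.
Proof. by rewrite /costA big_geq. Qed.

Lemma ord_pred_mod (e : 'I_m) j : (ord_pred e + j.+1 = e + j %[mod m])%N.
Proof.
rewrite /= modnDml.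
have -> : ((e + m).-1 + j.+1 = (e + j) + m)%N.
  by rewrite addnS -addSn prednK ?addn_gt0 ?hm ?orbT // addnAC.
by rewrite modnDr.
Qed.

Lemma ordS_mod (e : 'I_m) j : (ordS e + j = e + j.+1 %[mod m])%N.
Proof. by rewrite /= modnDml addSn addnS. Qed.

Lemma costA_pred e t : costA (ord_pred e) t.+1 = - (q e)^-1 * costA e t.
Proof.
rewrite /costA big_nat_recl // (qq_mod (ord_pred_mod e 0)) addn0 qq_ord.
by congr (_ * _); apply: eq_bigr => j _; rewrite (qq_mod (ord_pred_mod e j)).
Qed.

Lemma costA_S e t : costA e t.+1 = costA e t * - (qq (e + t.+1))^-1.
Proof. by rewrite /costA big_nat_recr. Qed.

Lemma costAbar_S B n : costAbar B n.+1 = - (qq B)^-1 * costAbar B.+1 n.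
Proof.
rewrite /costAbar big_nat_recl // addn0; congr (_ * _).
by apply: eq_bigr => k _; rewrite addSnnS.
Qed.

(* One more abar read before w multiplies the weight of w by the cost of
   moving it past all the a's of w. *)
Lemma wfrom_abar (e : 'I_m) t w B : B = (e + t.+1)%N %[mod m] ->
  wfrom e t.+1 w = wfrom e t w * costAbar B (count id w).
Proof.
rewrite /wfrom /wfold; elim: w e t B => [|b w IH] e t B hB /=.
  by rewrite /costAbar big_geq // mulr1.
case: b => /=; last by apply: IH; rewrite hB; apply/esym/ord_pred_mod.
rewrite wfold_scale [in RHS]wfold_scale /= !mul1r.
rewrite (IH (ordS e) t B.+1); last first.
  by rewrite -addn1 -modnDml hB modnDml addn1 -addnS -ordS_mod.
rewrite costAbar_S costA_S (qq_mod (esym hB)) -!mulrA; congr (_ * _).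
by rewrite mulrC -mulrA; congr (_ * _); rewrite mulrC.
Qed.

Lemma weight_a (j : 'I_m) w : weight (j, true :: w) = weight (ordS j, w).
Proof.
rewrite /weight /wfrom /wfold /= wfold_scale /= costA0 mul1r mulr1.
by rewrite [in RHS]wfold_scale /= mulr1.
Qed.

Lemma weight_abar (j : 'I_m) w :
  weight (j, false :: w) = weight (ord_pred j, w) * costAbar j (count id w).
Proof.
have hB : (j : nat) = (ord_pred j + 1)%N %[mod m] by rewrite ord_pred_mod addn0.
rewrite /weight /= -(wfrom_abar w hB).
by rewrite /wfrom /wfold /= [in LHS]wfold_scale [in RHS]wfold_scale /=.
Qed.

Lemma weight_rcons_a (v : 'I_m) w :
  weight (v, rcons w true) = weight (v, w) * costA (pend (v, w)) (count negb w).
Proof.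
rewrite /weight /wfrom /wfold /= foldl_rcons /=.
by have [-> ->] := wfold_end 1 v 0 w.
Qed.

Lemma weight_rcons_abar (v : 'I_m) w : weight (v, rcons w false) = weight (v, w).
Proof. by rewrite /weight /wfrom /wfold /= foldl_rcons. Qed.

Lemma weight_rel (v : 'I_m) u w :
  weight (v, u ++ [:: false, true & w]) =
  - (q (pend (v, u)))^-1 * weight (v, u ++ [:: true, false & w]).
Proof.
rewrite /weight /wfrom /wfold /= !foldl_cat.
have [h1 _] := wfold_end 1 v 0 u; rewrite /wfold in h1.
case: (foldl wstep (1, v, 0%N) u) h1 => [[c e] t] /= <-.
rewrite wfold_scale [in RHS]wfold_scale /= ord_predK ordSK costA_pred.
by rewrite [c * (_ * _)]mulrCA; exact: mulrCA.
Qed.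

Lemma nf_push_a (v : 'I_m) s t :
  eqE [:: (1, (v, nfword s t ++ [:: true]))]
      [:: (costA (endpoint v s t) t, (v, nfword s.+1 t))].
Proof.
elim: t => [|t IH]; first by rewrite nfwordT costA0; apply: eqE_refl.
set u := nfword s t; set r := endpoint v s t.
have swap : eqE [:: (1, (v, u ++ [:: false; true]))]
                [:: (- (q r)^-1, (v, u ++ [:: true; false]))].
  apply: (inI_lin_eq _ (inI_gen q (1, (v, u), r, (r, [::])))) => G.
  rewrite lin_gen /= pend_nfword eqxx lin_sub !lin_cons !lin_nil /=.
  by rewrite !mul1r !addr0 mulNr opprK addrC.
have IHabar := eqE_mulr (pend (v, u ++ [:: true]), [:: false]) IH.
have hend : pend (v, nfword s.+1 t) = pend (v, u ++ [:: true]).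
  have [a1 b1] := count_nfword s.+1 t; have [a0 b0] := count_nfword s t; rewrite -/u in a0 b0.
  by rewrite !pend_counts a1 b1 (count_cat id u) (count_cat negb u) a0 b0 /= !addn0 addn1.
rewrite (mulx_paths 1 1 [:: false] (erefl (pend (v, u ++ [:: true])))) in IHabar.
rewrite (mulx_paths _ 1 [:: false] hend) in IHabar.
have IHabar' : eqE [:: (- (q r)^-1, (v, u ++ [:: true; false]))]
    [:: (- (q r)^-1 * costA r t, (v, nfword s.+1 t.+1))].
  by move: (eqE_scale (- (q r)^-1) IHabar); rewrite /scalex /= !mulr1 -catA nfwordF.
rewrite -nfwordF -catA /=; apply: (eqE_trans swap).
have -> : endpoint v s t.+1 = ord_pred r.
  by rewrite -pend_nfword -nfwordF pend_cat pend_nfword.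
by rewrite costA_pred; exact: IHabar'.
Qed.

Lemma nf_path (v : 'I_m) w :
  eqE [:: (1, (v, w))] [:: (weight (v, w), (v, nfword (count id w) (count negb w)))].
Proof.
elim/last_ind: w => [|w b IH]; first exact: eqE_refl.
have st := eqE_mulr (pend (v, w), [:: b]) IH.
have h : pend (v, nfword (count id w) (count negb w)) = pend (v, w).
  by rewrite pend_nfword pend_counts.
rewrite (mulx_paths 1 1 [:: b] (erefl (pend (v, w)))) (mulx_paths _ 1 [:: b] h) in st.
rewrite cats1 mulr1 in st.
rewrite -cats1 !count_cat cats1 /=; case: b st => /= st; rewrite ?add0n ?addn0 ?addn1.
  rewrite weight_rcons_a pend_counts; apply: (eqE_trans st).
  by move: (eqE_scale (weight (v, w)) (nf_push_a v (count id w) (count negb w)));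
    rewrite /scalex /= mulr1.
by rewrite weight_rcons_abar -nfwordF -[weight _]mulr1.
Qed.

Definition nf (x : kq K m) : kq K m :=
  [seq (e.1 * weight e.2, (e.2.1, nfword (count id e.2.2) (count negb e.2.2))) | e <- x].

Lemma eqE_nf x : eqE x (nf x).
Proof.
elim: x => [|e x IH]; first exact: eqE_refl.
have h := eqE_cat (eqE_scale e.1 (nf_path e.2.1 e.2.2)) IH.
apply: (eqE_lin_eq _ _ h) => G; rewrite /scalex /= !lin_cons //.
by case: e {h} => a [v w] /=; rewrite mulr1.
Qed.

Definition detect (v : 'I_m) s t (p : Defs.path m) :=
  if (p.1 == v) && (count id p.2 == s) && (count negb p.2 == t) then weight p else 0.

Lemma detect_gen v s t g : lin (detect v s t) (gen q g) = 0.
Proof.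
case: g => [[[a [u1 u2]] r] w]; rewrite lin_gen /=.
case: eqP => [<-|_]; last by rewrite !(mul0r, mulr0).
case: (_ == w.1); last by rewrite !(mul0r, mulr0).
rewrite /detect /= !count_cat /= weight_rel !add0n.
case: ifP => _ /=; last by rewrite mulr0 addr0 !mulr0.
by rewrite -mulrDl subrr mul0r !mulr0.
Qed.

Lemma detect_eqE v s t x y : eqE x y -> lin (detect v s t) x = lin (detect v s t) y.
Proof.
move=> /inI_lin [l hl]; apply/eqP; rewrite -subr_eq0 -lin_sub hl.
by rewrite /gens lin_flatten_map big1 // => g _; apply: detect_gen.
Qed.

End Weight.

Lemma count_letters (w : seq bool) : (count id w + count negb w)%N = size w.
Proof. by rewrite -(count_predC id w); congr (_ + _)%N; apply: eq_count. Qed.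

Lemma counts_eq (w w' : seq bool) : size w = size w' -> zdeg w = zdeg w' ->
  count id w = count id w' /\ count negb w = count negb w'.
Proof.
rewrite /zdeg => hs hd; have := count_letters w; have := count_letters w'; lia.
Qed.

Lemma homog_counts (K : fieldType) m n d (z : kq K m) e0 :
  len_homog n z -> zhomog d z -> e0 \in z -> forall e, e \in z ->
  count id e.2.2 = count id e0.2.2 /\ count negb e.2.2 = count negb e0.2.2.
Proof.
move=> /allP hn /allP hd he0 e he; apply: counts_eq.
  by rewrite (eqP (hn e he)) (eqP (hn e0 he0)).
by rewrite (eqP (hd e he)) (eqP (hd e0 he0)).
Qed.

Section Coefficients.
Variables (K : fieldType) (m : nat) (hm : (0 < m)%N) (q : 'I_m -> K).
Variables (z : kq K m) (s t : nat).
Hypothesis hst : forall e, e \in z -> count id e.2.2 = s /\ count negb e.2.2 = t.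

Definition nfcoef v := lin (detect hm q v s t) z.

Lemma lin_nf G : lin G (nf hm q z) = \sum_(v : 'I_m) nfcoef v * G (v, nfword s t).
Proof.
rewrite /lin /nf big_map.
under [RHS]eq_bigr do rewrite /nfcoef /lin mulr_suml.
rewrite exchange_big /= [LHS]big_seq [RHS]big_seq.
apply: eq_bigr => [[a [u1 u2]]] /hst /= [c1 c2].
rewrite c1 c2 (bigD1 u1) //= big1 ?addr0 /detect /= ?c1 ?c2 ?eqxx //= ?mulrA //.
by move=> v /negbTE nv; rewrite eq_sym nv /= mulr0 mul0r.
Qed.

Lemma nfcoef_nonzero : ~ eq_in_E q z [::] -> exists v, nfcoef v != 0.
Proof.
move=> hz; case: (pickP (fun v => nfcoef v != 0)) => [v hv|h0]; first by exists v.
case: hz; apply: (eqE_lin_eq _ _ (eqE_nf hm q z)) => // G.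
rewrite lin_nf lin_nil big1 // => v _.
by have /negbFE/eqP -> := h0 v; rewrite mul0r.
Qed.

Lemma detect_z_idem v j : lin (detect hm q v s t) (mulx z [:: (1, (j, [::]))]) =
  (if endpoint v s t == j then 1 else 0) * nfcoef v.
Proof.
rewrite lin_mulx_path /nfcoef -lin_scaleG; apply: lin_eq_in => [[a [u1 u2]]] /hst /= [c1 c2].
rewrite /detect /= cats0 c1 c2 !eqxx !andbT mul1r.
case: (u1 =P v) => [->|_]; last by case: ifP; rewrite ?mulr0.
by rewrite pend_counts c1 c2; case: ifP; rewrite ?mul1r ?mul0r.
Qed.

Lemma detect_idem_z v j : lin (detect hm q v s t) (mulx [:: (1, (j, [::]))] z) =
  (if j == v then 1 else 0) * nfcoef v.
Proof.
rewrite lin_path_mulx mul1r /nfcoef -lin_scaleG; apply: lin_eq_in => [[a [u1 u2]]] _ /=.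
rewrite /detect /=.
case: (j =P u1) => [<-|nju]; first by case: ifP; case: (j == v); rewrite ?mul1r ?mul0r.
case: (u1 =P v) => [<-|_] /=; last by rewrite mulr0.
by case: (j =P u1) nju => // _ _; rewrite mul0r.
Qed.

Lemma detect_z_a v j : lin (detect hm q v s.+1 t) (mulx z [:: (1, (j, [:: true]))]) =
  (if endpoint v s t == j then costA hm q j t else 0) * nfcoef v.
Proof.
rewrite lin_mulx_path /nfcoef -lin_scaleG; apply: lin_eq_in => [[a [u1 u2]]] /hst /= [c1 c2].
rewrite /detect /= !count_cat /= c1 c2 addn1 addn0 !eqxx !andbT mul1r cats1.
case: (u1 =P v) => [->|_]; last by case: ifP; rewrite ?mulr0.
rewrite pend_counts c1 c2 weight_rcons_a pend_counts c1 c2.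
by rewrite addn0 eqxx /=; case: eqP => [->|_]; rewrite ?mul0r // mulrC.
Qed.

Lemma detect_a_z v j : lin (detect hm q v s.+1 t) (mulx [:: (1, (j, [:: true]))] z) =
  (if j == v then 1 else 0) * nfcoef (ordS j).
Proof.
rewrite lin_path_mulx mul1r /nfcoef -lin_scaleG; apply: lin_eq_in => [[a [u1 u2]]] _ /=.
rewrite /detect /= add1n eqSS.
case: (ordS j =P u1) => [<-|nju].
  by rewrite weight_a eqxx; case: (j == v); rewrite ?mul1r ?mul0r.
by case: (u1 =P ordS j) => [e|_] /=; [case: nju | rewrite mulr0].
Qed.

Lemma detect_z_abar v j : lin (detect hm q v s t.+1) (mulx z [:: (1, (j, [:: false]))]) =
  (if endpoint v s t == j then 1 else 0) * nfcoef v.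
Proof.
rewrite lin_mulx_path /nfcoef -lin_scaleG; apply: lin_eq_in => [[a [u1 u2]]] /hst /= [c1 c2].
rewrite /detect /= !count_cat /= c1 c2 addn1 addn0 !eqxx !andbT mul1r cats1.
case: (u1 =P v) => [->|_]; last by case: ifP; rewrite ?mulr0.
rewrite pend_counts c1 c2 weight_rcons_abar.
by rewrite addn0 eqxx /=; case: ifP; rewrite ?mul0r ?mul1r.
Qed.

Lemma detect_abar_z v j : lin (detect hm q v s t.+1) (mulx [:: (1, (j, [:: false]))] z) =
  (if j == v then costAbar hm q j s else 0) * nfcoef (ord_pred j).
Proof.
rewrite lin_path_mulx mul1r /nfcoef -lin_scaleG; apply: lin_eq_in => [[a [u1 u2]]] _ /=.
rewrite /detect /= add1n eqSS add0n.
case: (ord_pred j =P u1) => [<-|nju].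
  rewrite weight_abar eqxx; case: (j == v); rewrite ?mul0r //=.
  by case: ifP => /andP; [case=> /eqP -> _; rewrite mulrC|rewrite mulr0].
by case: (u1 =P ord_pred j) => [e|_] /=; [case: nju | rewrite mulr0].
Qed.

End Coefficients.

Lemma prodN_seq (K : fieldType) (r : seq nat) (F : nat -> K) :
  \prod_(i <- r) - F i = (-1) ^+ size r * \prod_(i <- r) F i.
Proof.
elim: r => [|a r IH]; first by rewrite !big_nil mul1r.
by rewrite !big_cons IH /= exprS -(mulN1r (F a)) mulrACA.
Qed.

Lemma sign_sq (K : fieldType) n : (-1) ^+ n * (-1) ^+ n = 1 :> K.
Proof. by rewrite -exprD addnn -mul2n exprM sqrrN !expr1n. Qed.

Section Recurrences.
Variables (K : fieldType) (m : nat) (hm : (0 < m)%N) (q : 'I_m -> K).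
Hypothesis hq : forall i, q i != 0.
Local Notation qq := (qq hm q).

Lemma vtxS i : vtx hm i.+1 = ordS (vtx hm i).
Proof. by apply: val_inj; rewrite /= -[((i %% m).+1)%N]addn1 modnDml addn1. Qed.

Lemma vtx_val (v : 'I_m) : vtx hm v = v.
Proof. by apply: val_inj; rewrite /= modn_small. Qed.

Lemma qq_vtx i j : qq (vtx hm i + j) = qq (i + j).
Proof. by apply: qq_mod; rewrite /= modnDml. Qed.

Lemma costA_vtx s t i : (-1) ^+ (s + t) * costA hm q (vtx hm i) t =
  (-1) ^+ s * (\prod_(1 <= l < t.+1) qq (i + l))^-1.
Proof.
have sz : size (index_iota 1 t.+1) = t by rewrite /index_iota size_iota subSS subn0.
rewrite /costA prodN_seq sz exprD -mulrA; congr (_ * _).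
by rewrite mulrA sign_sq mul1r -prodfV; apply: eq_bigr => l _; rewrite qq_vtx.
Qed.

Lemma costAbar_vtx s t i : (-1) ^+ (s + t) * costAbar hm q (ordS (vtx hm i)) s =
  (-1) ^+ t * (\prod_(1 <= l < s.+1) qq (i + l))^-1.
Proof.
have sz : size (index_iota 0 s) = s by rewrite /index_iota size_iota subn0.
rewrite /costAbar prodN_seq sz addnC exprD -mulrA; congr (_ * _).
rewrite mulrA sign_sq mul1r -prodfV big_add1 /=; apply: eq_bigr => l _.
by apply: congr1; apply: qq_mod; rewrite modnDml addSnnS modnDml.
Qed.

Lemma closed_form a b (cn : nat -> K) :
  (forall i, cn i.+1 = (-1) ^+ a * (\prod_(1 <= l < b.+1) qq (i + l))^-1 * cn i) ->
  forall i, cn i = (-1) ^+ (i * a) *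
                   \prod_(1 <= k < i.+1) (\prod_(k <= j < k + b) qq j)^-1 * cn 0.
Proof.
move=> h; elim=> [|i IH]; first by rewrite mul0n expr0 big_geq // !mul1r.
rewrite h IH [\prod_(1 <= k < i.+2) _]big_nat_recr //= mulSn exprD.
have -> : \prod_(i.+1 <= j < i.+1 + b) qq j = \prod_(1 <= l < b.+1) qq (i + l).
  rewrite -{1}[i.+1]add1n big_addn.
  have -> : (i.+1 + b - i = b.+1)%N by rewrite addSn -addnS addKn.
  by apply: eq_bigr => l _; rewrite addnC.
set X := (\prod_(1 <= l < b.+1) qq (i + l))^-1.
by rewrite !mulrA; congr (_ * _); rewrite (mulrAC _ X) (mulrAC _ X).
Qed.

Lemma prod_qq_period a : \prod_(0 <= k < m) qq (k + a) = zeta q.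
Proof.
elim: a => [|a IH].
  by rewrite /zeta big_mkord; apply: eq_bigr => i _; rewrite addn0 qq_ord.
set f := fun k => qq (k + a).
have e1 : \prod_(0 <= k < m) qq (k + a.+1) = \prod_(0 <= k < m) f k.+1.
  by apply: eq_bigr => k _; rewrite /f addnS addSn.
have e2 : \prod_(0 <= k < m.+1) f k = f 0 * \prod_(0 <= k < m) f k.+1.
  by rewrite big_nat_recl.
have fm : f m = f 0 by rewrite /f add0n; apply: qq_mod; rewrite modnDl.
rewrite big_nat_recr //= fm -/f IH mulrC in e2.
have nz : f 0 != 0 := hq (vtx hm (0 + a)).
by rewrite e1; apply: (mulfI nz); rewrite -e2.
Qed.

Lemma prod_zeta b : \prod_(1 <= k < m.+1) \prod_(k <= j < k + b) qq j = zeta q ^+ b.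
Proof.
have e k : \prod_(k <= j < k + b) qq j = \prod_(0 <= l < b) qq (l + k).
  by rewrite -{1}[k]add0n big_addn addKn.
under eq_bigr do rewrite e.
rewrite exchange_big /= (eq_bigr (fun _ => zeta q)); first by rewrite prodr_const_nat subn0.
move=> l _; rewrite big_add1 /= -(prod_qq_period l.+1); apply: eq_bigr => k _.
by rewrite !addnS addnC.
Qed.

Lemma zeta_relation a b (cn : nat -> K) :
  (forall i, cn i.+1 = (-1) ^+ a * (\prod_(1 <= l < b.+1) qq (i + l))^-1 * cn i) ->
  cn m = cn 0 -> cn 0 != 0 -> zeta q ^+ b = (-1) ^+ (m * a).
Proof.
move=> h hm0 nz; have := closed_form h m; rewrite hm0 prodfV prod_zeta.
set X := (-1) ^+ (m * a) * _ => e.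
have X1 : X = 1.
  by apply: (mulIf nz); rewrite mul1r -e.
move: X1; rewrite /X; case: (eqVneq (zeta q ^+ b) 0) => [->|nz2].
  by rewrite invr0 mulr0 => /eqP; rewrite eq_sym oner_eq0.
by move/(congr1 (fun x => x * zeta q ^+ b)); rewrite /= mulfVK // mul1r.
Qed.

End Recurrences.

Section Central.
Variables (K : fieldType) (m : nat) (hm : (0 < m)%N) (q : 'I_m -> K).
Variables (z : kq K m) (s t : nat).
Hypothesis hst : forall e, e \in z -> count id e.2.2 = s /\ count negb e.2.2 = t.
Hypothesis hc : graded_central q (s + t) z.

Local Notation c := (nfcoef hm q z s t).

(* z e_j = e_j z: the normal word from v carries weight only if it is a cycle. *)
Lemma nfcoef_cycle v : c v != 0 -> endpoint v s t = v.
Proof.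
move=> nz; have := detect_eqE hm v s t (@hc 0 [:: (1, (endpoint v s t, [::]))] isT).
rewrite lin_scale (detect_z_idem hm q hst) (detect_idem_z hm q z s t).
rewrite muln0 expr0 mul1r eqxx mul1r.
by case: eqP => // _; rewrite mul0r => h; rewrite h eqxx in nz.
Qed.

Hypothesis hmod : s = t %[mod m].

(* z a_j = (-1)^(s+t) a_j z *)
Lemma nfcoef_rec_a j : c (ordS j) = (-1) ^+ (s + t) * costA hm q j t * c j.
Proof.
have := detect_eqE hm j s.+1 t (@hc 1 [:: (1, (j, [:: true]))] isT).
rewrite lin_scale (detect_z_a hm q hst) (detect_a_z hm q z s t) endpoint_cycle //.
rewrite !eqxx mul1r muln1 => h.
by rewrite -mulrA h mulrA sign_sq mul1r.
Qed.

(* z abar_j = (-1)^(s+t) abar_j z, read at the vertex j + 1 *)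
Lemma nfcoef_rec_abar j : c (ordS j) = (-1) ^+ (s + t) * costAbar hm q (ordS j) s * c j.
Proof.
have := detect_eqE hm (ordS j) s t.+1 (@hc 1 [:: (1, (ordS j, [:: false]))] isT).
rewrite lin_scale (detect_z_abar hm q hst) (detect_abar_z hm q z s t).
rewrite endpoint_cycle // !eqxx ordSK mul1r muln1 => ->.
by rewrite mulrA.
Qed.

Local Notation cn i := (c (vtx hm i)).

Lemma cn_rec_a i : cn i.+1 = (-1) ^+ s * (\prod_(1 <= l < t.+1) qq hm q (i + l))^-1 * cn i.
Proof. by rewrite vtxS nfcoef_rec_a costA_vtx. Qed.

Lemma cn_rec_abar i :
  cn i.+1 = (-1) ^+ t * (\prod_(1 <= l < s.+1) qq hm q (i + l))^-1 * cn i.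
Proof. by rewrite vtxS nfcoef_rec_abar costAbar_vtx. Qed.

Lemma cn_period : cn m = cn 0.
Proof. by congr c; apply: val_inj; rewrite /= modnn mod0n. Qed.

Lemma nf_expansion (f : nat -> K) : (forall i, f i = cn i) ->
  eq_in_E q z (flatten [seq scalex (f i) (mulx (gam K hm i s) (del K hm i t))
                       | i <- iota 0 m]).
Proof.
move=> hf; apply: (eqE_lin_eq _ _ (eqE_nf hm q z)) => // G.
rewrite (lin_nf hm q hst) lin_flatten_map.
have hp i : pend (vtx hm i, nseq s true) = vtx hm (i + t).
  apply: val_inj; rewrite pend_counts /endpoint !count_nseq /= mul1n.
  by rewrite iter_ordS_val /= modnDml -modnDmr hmod modnDmr.
rewrite (eq_bigr (fun i => cn i * G (vtx hm i, nfword s t))); last first.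
  move=> i _; rewrite lin_scale /gam /del (mulx_paths 1 1 (nseq t false) (hp i)).
  by rewrite lin_cons lin_nil addr0 !mul1r hf.
have -> : iota 0 m = index_iota 0 m by rewrite /index_iota subn0.
rewrite big_mkord.
by apply: eq_bigr => v _; rewrite vtx_val.
Qed.

End Central.

Unset Implicit Arguments.
Set Strict Implicit.

Theorem mainTheorem3 (K : fieldType) (m : nat) (hm : (0 < m)%N)
    (q : 'I_m -> K) (hq : forall i, q i != 0)
    (z : kq K m) (n : nat) (d : int)
    (hn : len_homog n z) (hd : zhomog d z)
    (hc : graded_central q n z) (hz : ~ eq_in_E q z [::]) :
  exists (s t : nat) (c0 : K),
    [/\ s = t %[mod m], c0 != 0,
        eq_in_E q z (flatten [seq scalex (coef_c hm q s t c0 i)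
                                     (mulx (gam K hm i s) (del K hm i t))
                         | i <- iota 0 m]),
        (forall i : nat, (i < m)%N ->
           coef_c hm q s t c0 i =
           (-1) ^+ (i * t) *
             \prod_(1 <= k < i.+1) (\prod_(k <= j < k + s) qq hm q j)^-1 * c0)
      & zeta q ^+ s = (-1) ^+ (m * t) /\ zeta q ^+ t = (-1) ^+ (m * s)].
Proof.
case: z hn hd hc hz => [|e0 z'] hn hd hc hz; first by case: hz; apply: eqE_refl.
set s := count id e0.2.2; set t := count negb e0.2.2.
have he0 := mem_head e0 z'.
have hst := homog_counts hn hd he0.
have hlen : n = (s + t)%N.
  by rewrite -(eqP (allP hn e0 he0)) count_letters.
rewrite hlen in hc.
(* some normal-form coefficient is nonzero, so the normal words are cycles *)
have [v0 nz0] := nfcoef_nonzero hm hst hz.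
have hmod := endpoint_cycleP (nfcoef_cycle hst hc nz0).
have rec_a := cn_rec_a hm hst hc hmod.
have rec_abar := cn_rec_abar hm hst hc hmod.
have period := cn_period hm q (e0 :: z') s t.
pose cn i := nfcoef hm q (e0 :: z') s t (vtx hm i).
have fa := closed_form rec_a; have fb := closed_form rec_abar.
have c0nz : cn 0 != 0.
  by apply: contraNneq nz0 => c00; rewrite -(vtx_val hm v0) fa -/(cn 0) c00 mulr0.
exists s, t, (cn 0); split => //.
- by apply: nf_expansion => // i; rewrite fa.
- by move=> i _; rewrite /coef_c -fa -fb.
- exact: conj (zeta_relation hq rec_abar period c0nz) (zeta_relation hq rec_a period c0nz).
Qed.
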